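(* Let $L=\langle S,A,\to\rangle$ be a labelled transition system, $x,y\in\{o,b\}$, and $s,t\in S$ with $s\equiv^{ed}_{E(x,y)}t$. If there is an infinite sequence $s=s_0\xrightarrow{\tau}s_1\xrightarrow{\tau}s_2\xrightarrow{\tau}\cdots$, then there exist a state $t'$ with $t\twoheadrightarrow^+t'$ and an index $k$ such that $s_k\equiv^{ed}_{E(x,y)}t'$.
   Context: An LTS is $\langle S,A,\to\rangle$ with states $S$, actions $A$ containing the internal action $\tau$, and $\to\subseteq S\times A\times S$; write $s\xrightarrow{a}t$ and $\twoheadrightarrow^+$ for the transitive closure of $\xrightarrow{\tau}$. Game with explicit divergence. Let $\frown,\smile$ be formal tags and $E\subseteq\{\frown,\smile\}$. Spoiler-owned configurations $\langle (s,t),c,m,r\rangle_S$ and Duplicator-owned $\langle (s,t),c,m,r\rangle_D$ have $(s,t)\in S\times S$, $c\in (A\times S)\cup\{\dagger\}$, $m\in (S\times\{\frown,\smile\})\cup\{\dagger\}$, $r\in\{*,\checkmark\}$. From $\langle (s,t),c,m,r\rangle_S$ Spoiler may: (S1) move to $\langle (s,t),c,m,*\rangle_D$ if $c\neq\dagger$; (S2a) for some $s\xrightarrow{a}s'$, move to $\langle (s,t),(a,s'),(t,\frown),*\rangle_D$ if $c=\dagger$; (S2b) for some $s\xrightarrow{a}s'$, move to $\langle (s,t),(a,s'),(t,\frown),\checkmark\rangle_D$ if $c\neq (a,s')$; (S3) for some $t\xrightarrow{a}t'$, move to $\langle (t,s),(a,t'),(s,\frown),\checkmark\rangle_D$. From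 $\langle (u,v),(a,u'),(\bar v,f),r\rangle_D$ Duplicator may: (D1) move to $\langle (u',\bar v),\dagger,\dagger,*\rangle_S$ if $a=\tau$; (D2) if $f=\frown$ and $\bar v\xrightarrow{a}v'$: (a) move to $\langle (u',v'),(a,u'),(v',\smile),*\rangle_S$, or (b) move to $\langle (u',v'),\dagger,\dagger,\checkmark\rangle_S$, or (c) only if $\smile\in E$, move to $\langle (u,v),(a,u'),(v',\smile),*\rangle_S$; (D3) for some $\bar v\xrightarrow{\tau}v'$: (a) move to $\langle (u,v'),(a,u'),(v',f),*\rangle_S$, or (b) only if $f=\smile$, move to $\langle (u',v'),\dagger,\dagger,\checkmark\rangle_S$, or (c) only if $f\in E$, move to $\langle (u,v),(a,u'),(v',f),*\rangle_S$. Duplicator wins a finite play if Spoiler gets stuck, and an infinite play if it has infinitely many $\checkmark$ rewards; other plays are won by Spoiler. $s\equiv^{ed}_E t$ iff Duplicator has a strategy winning all plays from $\langle (s,t),\dagger,\dagger,*\rangle_S$. $E(x,y)$ is the smallest set with $\frown\in E(o,y)$ and $\smile\in E(x,o)$ for all $x,y\in\{o,b\}$. *)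

From Stdlib Require Import List Relations.
Import ListNotations.

(* Formal tags: Frown = ⌢, Smile = ⌣ *)
Inductive tag := Frown | Smile.
(* rewards: Star = *, Check = ✓ *)
Inductive reward := Star | Check.
Inductive owner := SpoilerPos | DuplicatorPos.
Inductive ob := o | b.

Inductive Exy : ob -> ob -> tag -> Prop :=
| Exy_frown : forall y, Exy o y Frown
| Exy_smile : forall x, Exy x o Smile.

Section Game.
Variables (S A : Type) (tau : A) (step : S -> A -> S -> Prop).

(* configuration <(s,t), c, m, r>_owner ; None encodes † *)
Record conf := Conf {
  cown : owner;
  cpos : S * S;
  cc : option (A * S);
  cm : option (S * tag);
  cr : reward }.

Definition tau_plus : S -> S -> Prop := clos_trans S (fun u v => step u tau v).

Inductive move (E : tag -> Prop) : conf -> conf -> Prop :=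
| S1 : forall s t c m r, c <> None ->
    move E (Conf SpoilerPos (s,t) c m r) (Conf DuplicatorPos (s,t) c m Star)
| S2a : forall s t m r a s', step s a s' ->
    move E (Conf SpoilerPos (s,t) None m r)
           (Conf DuplicatorPos (s,t) (Some (a,s')) (Some (t,Frown)) Star)
| S2b : forall s t c m r a s', step s a s' -> c <> Some (a,s') ->
    move E (Conf SpoilerPos (s,t) c m r)
           (Conf DuplicatorPos (s,t) (Some (a,s')) (Some (t,Frown)) Check)
| S3 : forall s t c m r a t', step t a t' ->
    move E (Conf SpoilerPos (s,t) c m r)
           (Conf DuplicatorPos (t,s) (Some (a,t')) (Some (s,Frown)) Check)
| D1 : forall u v a u' vb f r, a = tau ->
    move E (Conf DuplicatorPos (u,v) (Some (a,u')) (Some (vb,f)) r)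
           (Conf SpoilerPos (u',vb) None None Star)
| D2a : forall u v a u' vb r v', step vb a v' ->
    move E (Conf DuplicatorPos (u,v) (Some (a,u')) (Some (vb,Frown)) r)
           (Conf SpoilerPos (u',v') (Some (a,u')) (Some (v',Smile)) Star)
| D2b : forall u v a u' vb r v', step vb a v' ->
    move E (Conf DuplicatorPos (u,v) (Some (a,u')) (Some (vb,Frown)) r)
           (Conf SpoilerPos (u',v') None None Check)
| D2c : forall u v a u' vb r v', step vb a v' -> E Smile ->
    move E (Conf DuplicatorPos (u,v) (Some (a,u')) (Some (vb,Frown)) r)
           (Conf SpoilerPos (u,v) (Some (a,u')) (Some (v',Smile)) Star)
| D3a : forall u v a u' vb f r v', step vb tau v' ->
    move E (Conf DuplicatorPos (u,v) (Some (a,u')) (Some (vb,f)) r)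
           (Conf SpoilerPos (u,v') (Some (a,u')) (Some (v',f)) Star)
| D3b : forall u v a u' vb r v', step vb tau v' ->
    move E (Conf DuplicatorPos (u,v) (Some (a,u')) (Some (vb,Smile)) r)
           (Conf SpoilerPos (u',v') None None Check)
| D3c : forall u v a u' vb f r v', step vb tau v' -> E f ->
    move E (Conf DuplicatorPos (u,v) (Some (a,u')) (Some (vb,f)) r)
           (Conf SpoilerPos (u,v) (Some (a,u')) (Some (v',f)) Star).

(* A Duplicator strategy: given the history so far (most recent configuration
   first), choose the next configuration. *)
Definition dstrategy := list conf -> conf.

Fixpoint hist (p : nat -> conf) (n : nat) : list conf :=
  match n with
  | 0 => [p 0]
  | Datatypes.S k => p (Datatypes.S k) :: hist p k
  end.

Definition consistent_upto (E : tag -> Prop) (sigma : dstrategy) (c0 : conf)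
    (p : nat -> conf) (n : nat) : Prop :=
  p 0 = c0 /\
  forall i, i < n ->
    move E (p i) (p (Datatypes.S i)) /\
    (cown (p i) = DuplicatorPos -> p (Datatypes.S i) = sigma (hist p i)).

(* sigma wins all plays from c0:
   - Duplicator is never stuck (sigma always proposes a legal move), so every
     finite maximal play ends with Spoiler stuck (Duplicator wins);
   - every infinite play contains infinitely many ✓ rewards. *)
Definition dwinning (E : tag -> Prop) (sigma : dstrategy) (c0 : conf) : Prop :=
  (forall p n, consistent_upto E sigma c0 p n ->
     cown (p n) = DuplicatorPos -> move E (p n) (sigma (hist p n))) /\
  (forall p, (forall n, consistent_upto E sigma c0 p n) ->
     forall N, exists n, N <= n /\ cr (p n) = Check).

Definition ed_equiv (E : tag -> Prop) (s t : S) : Prop :=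
  exists sigma : dstrategy, dwinning E sigma (Conf SpoilerPos (s,t) None None Star).

End Game.

Arguments ed_equiv {S A} tau step E s t.
Arguments tau_plus {S A} tau step _ _.

(* Spoiler chases the divergence: with no challenge pending he plays the next
   tau-step of the sequence (S2a), otherwise he passes (S1), so he never earns a
   reward.  Along the resulting play Spoiler's state is always some [ss k] and
   every state of Duplicator is tau*-reachable from [t].  As sigma wins, a
   reward does occur; only D2b and D3b award one, and they do so right after a
   tau-step of Duplicator, in a fresh configuration <(ss k, t'), †, †, ✓> with
   t ->>+ t'.  The remainder of sigma is winning from <(ss k, t'), †, †, *>. *)

From Stdlib Require Import Arith List Relations Lia ClassicalEpsilon.
Import ListNotations.

Section Plays.
Variables (S A : Type) (tau : A) (step : S -> A -> S -> Prop) (E : tag -> Prop).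

Local Notation conf := (conf S A).
Local Notation Conf := (Conf S A).
Local Notation cown := (cown S A).
Local Notation cpos := (cpos S A).
Local Notation cc := (cc S A).
Local Notation cm := (cm S A).
Local Notation cr := (cr S A).
Local Notation hist := (hist S A).
Local Notation move := (move S A tau step E).
Local Notation consistent_upto := (consistent_upto S A tau step E).
Local Notation dwinning := (dwinning S A tau step E).

Lemma hist_ext (p q : nat -> conf) n :
  (forall i, i <= n -> p i = q i) -> hist p n = hist q n.
Proof.
  induction n as [|n IH]; intros Hpq; simpl.
  - now rewrite Hpq.
  - rewrite Hpq, IH; auto.
Qed.

Lemma consistent_upto_le sigma c0 p n m :
  consistent_upto sigma c0 p n -> m <= n -> consistent_upto sigma c0 p m.
Proof.
  intros [H0 H] Hmn; split; auto.
  intros i Hi; apply H; lia.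
Qed.

Lemma move_from_spoiler_any_reward pos c m r r' c' :
  move (Conf SpoilerPos pos c m r) c' -> move (Conf SpoilerPos pos c m r') c'.
Proof. intros H; inversion H; subst; econstructor; eauto. Qed.

Lemma consistent_upto_succ sigma c0 p n :
  consistent_upto sigma c0 p n -> move (p n) (p (Datatypes.S n)) ->
  (cown (p n) = DuplicatorPos -> p (Datatypes.S n) = sigma (hist p n)) ->
  consistent_upto sigma c0 p (Datatypes.S n).
Proof.
  intros [H0 H] Hmove Hsigma; split; auto.
  intros i Hi; destruct (Nat.eq_dec i n) as [->|Hin]; auto.
  apply H; lia.
Qed.

Section Splice.
Variables (q : nat -> conf) (m : nat).

Definition splice (p : nat -> conf) (j : nat) : conf :=
  if j <=? m then q j else p (j - m).

Lemma splice_le p j : j <= m -> splice p j = q j.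
Proof. intros Hj; unfold splice; destruct (Nat.leb_spec j m); auto; lia. Qed.

Lemma splice_add p j : 1 <= j -> splice p (m + j) = p j.
Proof.
  intros Hj; unfold splice; destruct (Nat.leb_spec (m + j) m); [lia|].
  f_equal; lia.
Qed.

(* [graft hq h] replaces the oldest entry of the history [h] by the history [hq]. *)
Fixpoint graft (hq h : list conf) : list conf :=
  match h with
  | [] => []
  | [_] => hq
  | c :: h' => c :: graft hq h'
  end.

Lemma hist_splice p j : hist (splice p) (m + j) = graft (hist q m) (hist p j).
Proof.
  induction j as [|j IH].
  - rewrite Nat.add_0_r; apply hist_ext; intros; apply splice_le; auto.
  - replace (m + Datatypes.S j) with (Datatypes.S (m + j)) by lia.
    cbn [hist]; rewrite IH, <- (splice_add p (Datatypes.S j)) by lia.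
    replace (m + Datatypes.S j) with (Datatypes.S (m + j)) by lia.
    destruct j; reflexivity.
Qed.

Variables (sigma : dstrategy S A) (c0 : conf) (pos : S * S)
  (c : option (A * S)) (mm : option (S * tag)) (r r' : reward).
Hypothesis (Hq : consistent_upto sigma c0 q m)
  (Hqm : q m = Conf SpoilerPos pos c mm r).

Definition resume : dstrategy S A := fun h => sigma (graft (hist q m) h).

Lemma consistent_upto_splice p n :
  consistent_upto resume (Conf SpoilerPos pos c mm r') p n ->
  consistent_upto sigma c0 (splice p) (m + n).
Proof.
  intros [Hp0 Hp]; destruct Hq as [Hq0 Hqi]; split.
  - now rewrite splice_le by lia.
  - intros i Hi; destruct (lt_eq_lt_dec i m) as [[Him| ->]|Hmi].
    + rewrite !splice_le by lia.
      rewrite (hist_ext (splice p) q) by (intros; apply splice_le; lia).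
      auto.
    + rewrite splice_le, <- Nat.add_1_r, splice_add by lia.
      split; [|now rewrite Hqm].
      rewrite Hqm; apply (move_from_spoiler_any_reward _ _ _ r').
      rewrite <- Hp0; apply Hp; lia.
    + replace i with (m + (i - m)) by lia.
      rewrite <- Nat.add_succ_r, !splice_add, hist_splice by lia.
      apply Hp; lia.
Qed.

Lemma dwinning_resume :
  dwinning sigma c0 -> dwinning resume (Conf SpoilerPos pos c mm r').
Proof.
  intros [Hlegal Hcheck]; split.
  - intros p [|n] Hp Hown.
    + destruct Hp as [Hp0 _]; rewrite Hp0 in Hown; discriminate.
    + pose proof (Hlegal _ _ (consistent_upto_splice p _ Hp)) as Hmove.
      rewrite splice_add, hist_splice in Hmove by lia; auto.
  - intros p Hp N.
    assert (Hplay : forall n, consistent_upto sigma c0 (splice p) n).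
    { intros n; apply consistent_upto_le with (m + n);
        [apply consistent_upto_splice, Hp | lia]. }
    destruct (Hcheck _ Hplay (m + N + 1)) as [n [HNn Hn]].
    exists (n - m); split; [lia|].
    replace n with (m + (n - m)) in Hn by lia.
    now rewrite splice_add in Hn by lia.
Qed.

End Splice.

Lemma ed_equiv_of_reached sigma c0 q m u w r :
  dwinning sigma c0 -> consistent_upto sigma c0 q m ->
  q m = Conf SpoilerPos (u, w) None None r -> ed_equiv tau step E u w.
Proof. intros Hwin Hq Hqm; exists (resume q m sigma); eapply dwinning_resume; eauto. Qed.

Section Play.
Variables (sigma : dstrategy S A) (spoil : conf -> conf) (c0 : conf).

Definition play_next (h : list conf) : conf :=
  match h with
  | c :: _ => match cown c with DuplicatorPos => sigma h | SpoilerPos => spoil c end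
  | [] => c0
  end.

Fixpoint play_hist (n : nat) : list conf :=
  match n with
  | 0 => [c0]
  | Datatypes.S n => play_next (play_hist n) :: play_hist n
  end.

Definition play (n : nat) : conf := hd c0 (play_hist n).

Lemma play_hist_hist n : play_hist n = hist play n.
Proof. induction n as [|n IH]; simpl; [reflexivity|]; now rewrite <- IH. Qed.

Lemma play_succ n :
  play (Datatypes.S n) =
  match cown (play n) with
  | DuplicatorPos => sigma (hist play n)
  | SpoilerPos => spoil (play n)
  end.
Proof. unfold play at 1; simpl; rewrite play_hist_hist; now destruct n. Qed.

Lemma play_invariant (Inv : conf -> Prop) :
  (forall p n, consistent_upto sigma c0 p n ->
     cown (p n) = DuplicatorPos -> move (p n) (sigma (hist p n))) ->
  Inv c0 ->
  (forall c, Inv c -> cown c = SpoilerPos -> move c (spoil c) /\ Inv (spoil c)) ->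
  (forall c c', Inv c -> cown c = DuplicatorPos -> move c c' -> Inv c') ->
  forall n, consistent_upto sigma c0 play n /\ Inv (play n).
Proof.
  intros Hlegal Hinit Hspoil Hdup n.
  induction n as [|n [Hcons Hinv]].
  - split; [split; [reflexivity | intros; lia] | exact Hinit].
  - assert (Hnext : move (play n) (play (Datatypes.S n)) /\
                    (cown (play n) = DuplicatorPos ->
                     play (Datatypes.S n) = sigma (hist play n)) /\
                    Inv (play (Datatypes.S n))).
    { rewrite play_succ; destruct (cown (play n)) eqn:Hown.
      - destruct (Hspoil _ Hinv Hown); repeat split; auto; discriminate.
      - pose proof (Hlegal _ _ Hcons Hown); repeat split; eauto. }
    destruct Hnext as (Hmove & Hsigma & Hinv').
    split; [apply consistent_upto_succ|]; auto.
Qed.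

End Play.

Section Divergence.
Variables (ss : nat -> S) (t : S).
Hypothesis Hss : forall n, step (ss n) tau (ss (Datatypes.S n)).

Local Notation tau_star := (clos_refl_trans S (fun u v => step u tau v)).

(* Spoiler's move sees only the current configuration, and its state may occur
   at several indices of [ss]; hence the choice. *)
Definition tau_successor (u : S) : S :=
  epsilon (inhabits (ss 0)) (fun u' => exists k, ss k = u /\ u' = ss (Datatypes.S k)).

Lemma tau_successor_spec k :
  exists k', ss k' = ss k /\ tau_successor (ss k) = ss (Datatypes.S k').
Proof.
  apply (epsilon_spec (inhabits (ss 0))
           (fun u' => exists k', ss k' = ss k /\ u' = ss (Datatypes.S k'))).
  eauto.
Qed.

Definition chase (c : conf) : conf :=
  match cc c with
  | None => Conf DuplicatorPos (cpos c)
              (Some (tau, tau_successor (fst (cpos c))))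
              (Some (snd (cpos c), Frown)) Star
  | Some _ => Conf DuplicatorPos (cpos c) (cc c) (cm c) Star
  end.

Record on_track (c : conf) : Prop := {
  track_left : exists k, fst (cpos c) = ss k;
  track_right : tau_star t (snd (cpos c));
  track_challenge : forall a u', cc c = Some (a, u') -> a = tau /\ exists k, u' = ss k;
  track_memory : forall v f, cm c = Some (v, f) -> tau_star t v;
  track_check : cr c = Check ->
    cown c = SpoilerPos /\ cc c = None /\ cm c = None /\
    tau_plus tau step t (snd (cpos c)) }.

Lemma on_track_init : on_track (Conf SpoilerPos (ss 0, t) None None Star).
Proof. split; simpl; try discriminate; eauto using rt_refl. Qed.

Lemma chase_on_track c :
  on_track c -> cown c = SpoilerPos -> move c (chase c) /\ on_track (chase c).
Proof.
  intros [[k Hk] Hright Hchal Hmem _] Hown.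
  destruct c as [o [u w] [[a u']|] mm r]; simpl in *; subst o u; unfold chase; simpl.
  - split; [apply S1; discriminate|].
    split; simpl; eauto; discriminate.
  - destruct (tau_successor_spec k) as [k' [Hk' ->]].
    split; [apply S2a; rewrite <- Hk'; apply Hss|].
    split; simpl; try discriminate; eauto.
    + intros a u' Heq; injection Heq as <- <-; eauto.
    + intros v f Heq; injection Heq as <- <-; auto.
Qed.

Lemma tau_star_step u v : tau_star t u -> step u tau v -> tau_star t v.
Proof. intros Hu Huv; apply rt_trans with u; [exact Hu | now apply rt_step]. Qed.

Lemma tau_plus_star_step u v : tau_star t u -> step u tau v -> tau_plus tau step t v.
Proof. intros Hu Huv; apply clos_rt_t with u; [exact Hu | now apply t_step]. Qed.

Lemma duplicator_on_track c c' :
  on_track c -> cown c = DuplicatorPos -> move c c' -> on_track c'.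
Proof.
  intros [[k Hk] Hright Hchal Hmem _] Hown Hmove.
  inversion Hmove; subst; simpl in *; try discriminate;
    destruct (Hchal _ _ eq_refl) as [Ha [k' ->]]; try subst a;
    specialize (Hmem _ _ eq_refl).
  all: split; simpl; try discriminate; eauto using tau_star_step.
  all: try (intros ? ? Heq; injection Heq as <- <-); eauto using tau_star_step.
  all: intros _; repeat split; eauto using tau_plus_star_step.
Qed.

Lemma ed_equiv_along_divergence :
  ed_equiv tau step E (ss 0) t ->
  exists t' k, tau_plus tau step t t' /\ ed_equiv tau step E (ss k) t'.
Proof.
  intros [sigma Hwin].
  set (c0 := Conf SpoilerPos (ss 0, t) None None Star).
  assert (Hplay : forall n, consistent_upto sigma c0 (play sigma chase c0) n /\
                            on_track (play sigma chase c0 n)).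
  { apply play_invariant; [apply Hwin | apply on_track_init |
                           apply chase_on_track | apply duplicator_on_track]. }
  destruct (proj2 Hwin _ (fun n => proj1 (Hplay n)) 0) as [n [_ Hcheck]].
  destruct (Hplay n) as [Hcons Htrack].
  destruct (track_check _ Htrack Hcheck) as (Hown & Hc & Hm & Hplus).
  destruct (track_left _ Htrack) as [k Hk].
  exists (snd (cpos (play sigma chase c0 n))), k; split; [exact Hplus|].
  rewrite <- Hk; eapply ed_equiv_of_reached; [exact Hwin | exact Hcons |].
  destruct (play sigma chase c0 n) as [o [u w] c m r]; simpl in *.
  now subst.
Qed.

End Divergence.
End Plays.

Theorem lemma6p9 (S A : Type) (tau : A) (step : S -> A -> S -> Prop)
    (x y : ob) (s t : S) (ss : nat -> S) :
  ed_equiv tau step (Exy x y) s t ->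
  ss 0 = s ->
  (forall n, step (ss n) tau (ss (Datatypes.S n))) ->
  exists t' k, tau_plus tau step t t' /\ ed_equiv tau step (Exy x y) (ss k) t'.
Proof.
  intros Hst <- Hss.
  now apply ed_equiv_along_divergence.
Qed.
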